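(* Let $\mathcal A,\mathcal E\in\mathbb Q^{n\times n\times n_3}$, let $\operatorname{Ind}_{QT}(\mathcal A)=k$ and let $\mathcal A^D$ be the QT-Drazin inverse of $\mathcal A$. Suppose $\mathcal E=\mathcal A*_Q\mathcal A^D*_Q\mathcal E*_Q\mathcal A*_Q\mathcal A^D$, and set $\mathcal B=\mathcal A+\mathcal E$. If $0<\rho_{QT}(\mathcal A^D*_Q\mathcal E)<1$, then \begin{align*} \mathcal A*_Q\mathcal A^D&=\mathcal B*_Q\mathcal B^D,\\ \mathcal B^D-\mathcal A^D&=-\mathcal B^D*_Q\mathcal E*_Q\mathcal A^D=-\mathcal A^D*_Q\mathcal E*_Q\mathcal B^D,\\ \mathcal B^D&=(\mathcal I+\mathcal A^D*_Q\mathcal E)^{-1}*_Q\mathcal A^D=\mathcal A^D*_Q(\mathcal I+\mathcal E*_Q\mathcal A^D)^{-1}, \end{align*} where $\mathcal B^D$ is the QT-Drazin inverse of $\mathcal B$.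
   Context: $\mathbb Q$ denotes the real quaternions with the usual Hamilton multiplication and $|a|=\sqrt{a_0^2+a_1^2+a_2^2+a_3^2}$; $\mathbb C$ is identified with $\{a_0+a_1\mathbf i\}$. Every quaternion array $A=A_0+A_1\mathbf i+A_2\mathbf j+A_3\mathbf k$ (real $A_t$) is written uniquely as $A=A_{\mathbf d}+\mathbf jA_{\mathbf c}$ with $A_{\mathbf d}=A_0+A_1\mathbf i$, $A_{\mathbf c}=A_2-A_3\mathbf i$. For $\mathcal A\in\mathbb Q^{n_1\times n_2\times n_3}$, $\mathcal A^{(s)}=\mathcal A(:,:,s)$. For a complex tensor $\mathcal C$, $\mathtt{bcirc}(\mathcal C)$ is the block circulant matrix with $(p,q)$ block $\mathcal C^{(((p-q)\bmod n_3)+1)}$. $P_{n_3}$ is the permutation matrix with first row $e_1^T$ and $r$-th row $e_{n_3+2-r}^T$ ($r\ge2$). $\mathtt{bcirc_z}(\mathcal A)=\mathtt{bcirc}(\mathcal A_{\mathbf d})+\mathbf j\,\mathtt{bcirc}(\mathcal A_{\mathbf c})(P_{n_3}\otimes I_{n_2})$. $\mathtt{unfold}(\mathcal B)=[\mathcal B^{(1)};\dots;\mathcal B^{(n_3)}]$, $\mathtt{fold}$ its inverse; QT-product $\mathcal A*_Q\mathcal B=\mathtt{fold}(\mathtt{bcirc_z}(\mathcal A)\mathtt{unfold}(\mathcal B))$; identity tensor $\mathcal I$: first frontal slice $I_n$, others zero; $\mathcal A^0=\mathcal I$, $\mathcal A^{k+1}=\mathcal A*_Q\mathcal A^k$; $\mathcal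 M^{-1}$ is the tensor with $\mathcal M*_Q\mathcal M^{-1}=\mathcal M^{-1}*_Q\mathcal M=\mathcal I$. Conjugate transpose: for complex $\mathcal C$, $\mathcal C^*$ has frontal slices $(\mathcal C^{(1)})^*$ and $(\mathcal C^{(n_3+2-s)})^*$ ($s\ge2$); $\mathcal A^*$ is defined by $\mathtt{unfold}(\mathcal A^* )=\mathtt{unfold}(\mathcal A_{\mathbf d}^* )-(P_{n_3}\otimes I_{n_2})\mathtt{unfold}(\mathcal A_{\mathbf c}^* )\mathbf j$; $\mathcal U$ is unitary if $\mathcal U^**_Q\mathcal U=\mathcal U*_Q\mathcal U^*=\mathcal I$. QT-rank: given a QT-SVD $\mathcal A=\mathcal U*_Q\mathcal S*_Q\mathcal V^*$ ($\mathcal U,\mathcal V$ unitary, every frontal slice of $\mathcal S$ diagonal), $\operatorname{rank}_{QT}(\mathcal A)=\#\{i\le\min(n_1,n_2):\|\mathcal S(i,i,:)\|_F>0\}$. QT-index $\operatorname{Ind}_{QT}(\mathcal A)$: least $k\ge0$ with $\operatorname{rank}_{QT}(\mathcal A^{k+1})=\operatorname{rank}_{QT}(\mathcal A^k)$. QT-Drazin inverse of $\mathcal A$ with $\operatorname{Ind}_{QT}(\mathcal A)=k$: $\mathcal X=\mathcal A^D$ with $\mathcal A^k*_Q\mathcal X*_Q\mathcal A=\mathcal A^k$, $\mathcal X*_Q\mathcal A*_Q\mathcal X=\mathcal X$, $\mathcal A*_Q\mathcal X=\mathcal X*_Q\mathcal A$. A right eigenvalue of a square quaternion matrix $M$ is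 $\lambda$ with $Mx=x\lambda$, $x\ne0$; $\rho(M)=\max|\lambda|$; $\rho_{QT}(\mathcal A)=\rho(\mathtt{bcirc_z}(\mathcal A))$. *)

From mathcomp Require Import all_boot all_order all_algebra.
From mathcomp Require Import classical_sets reals.
Set Implicit Arguments. Unset Strict Implicit. Unset Printing Implicit Defensive.
Import Order.TTheory GRing.Theory Num.Theory.
Local Open Scope ring_scope.

Section Quat.
Variable R : realType.

Record quat := Quat { q0 : R; q1 : R; q2 : R; q3 : R }.

Definition qzero : quat := Quat 0 0 0 0.
Definition qone : quat := Quat 1 0 0 0.
Definition qj : quat := Quat 0 0 1 0.
Definition qadd (a b : quat) : quat :=
  Quat (q0 a + q0 b) (q1 a + q1 b) (q2 a + q2 b) (q3 a + q3 b).
Definition qopp (a : quat) : quat := Quat (- q0 a) (- q1 a) (- q2 a) (- q3 a).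
Definition qsub (a b : quat) : quat := qadd a (qopp b).
Definition qmul (a b : quat) : quat :=
  Quat (q0 a * q0 b - q1 a * q1 b - q2 a * q2 b - q3 a * q3 b)
       (q0 a * q1 b + q1 a * q0 b + q2 a * q3 b - q3 a * q2 b)
       (q0 a * q2 b - q1 a * q3 b + q2 a * q0 b + q3 a * q1 b)
       (q0 a * q3 b + q1 a * q2 b - q2 a * q1 b + q3 a * q0 b).
Definition qnorm2 (a : quat) : R := q0 a ^+ 2 + q1 a ^+ 2 + q2 a ^+ 2 + q3 a ^+ 2.
Definition qnorm (a : quat) : R := Num.sqrt (qnorm2 a).

(* complex numbers are identified with {a0 + a1 i} inside the quaternions *)
Definition dpart (a : quat) : quat := Quat (q0 a) (q1 a) 0 0.
Definition cpart (a : quat) : quat := Quat (q2 a) (- q3 a) 0 0.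
Definition cconj (a : quat) : quat := Quat (q0 a) (- q1 a) 0 0.

Definition qmx (I J : finType) := I -> J -> quat.
Definition qmxmul (I J K : finType) (A : qmx I J) (B : qmx J K) : qmx I K :=
  fun i k => \big[qadd/qzero]_(j : J) qmul (A i j) (B j k).
Definition qmxadd (I J : finType) (A B : qmx I J) : qmx I J :=
  fun i j => qadd (A i j) (B i j).
Definition qmxsub (I J : finType) (A B : qmx I J) : qmx I J :=
  fun i j => qsub (A i j) (B i j).

Definition right_eigenvalue (I : finType) (M : qmx I I) (l : quat) : Prop :=
  exists x : I -> quat, (exists i, x i <> qzero) /\
    forall i, \big[qadd/qzero]_(j : I) qmul (M i j) (x j) = qmul (x i) l.
Definition qspec_rad (I : finType) (M : qmx I I) : R :=
  sup [set qnorm l | l in [set l | right_eigenvalue M l]].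

(* third-order quaternion tensors; the frontal slice index is 0-based *)
Definition qtensor (n1 n2 n3 : nat) := 'I_n1 -> 'I_n2 -> 'I_n3 -> quat.

Definition ord_pos n (p : 'I_n) : (0 < n)%N :=
  leq_ltn_trans (leq0n p) (ltn_ord p).
Definition ordmod n (p : 'I_n) (m : nat) : 'I_n :=
  Ordinal (ltn_pmod m (ord_pos p)).

Definition tdpart n1 n2 n3 (A : qtensor n1 n2 n3) : qtensor n1 n2 n3 :=
  fun i j s => dpart (A i j s).
Definition tcpart n1 n2 n3 (A : qtensor n1 n2 n3) : qtensor n1 n2 n3 :=
  fun i j s => cpart (A i j s).

(* block circulant: block (p,q) is slice ((p - q) mod n3)  (0-based) *)
Definition bcirc n1 n2 n3 (C : qtensor n1 n2 n3) :
  qmx ('I_n3 * 'I_n1)%type ('I_n3 * 'I_n2)%type :=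
  fun a b => C a.2 b.2 (ordmod a.1 (a.1 + n3 - b.1)%N).

(* P_{n3}: first row e_1^T, r-th row e_{n3+2-r}^T (1-based) *)
Definition Pmx n3 : qmx 'I_n3 'I_n3 :=
  fun r q => if val q == ((n3 - r) %% n3)%N then qone else qzero.
Arguments Pmx : clear implicits.
Definition kronI n3 n (M : qmx 'I_n3 'I_n3) : qmx ('I_n3 * 'I_n)%type ('I_n3 * 'I_n)%type :=
  fun a b => if a.2 == b.2 then M a.1 b.1 else qzero.

Definition bcircz n1 n2 n3 (A : qtensor n1 n2 n3) :
  qmx ('I_n3 * 'I_n1)%type ('I_n3 * 'I_n2)%type :=
  qmxadd (bcirc (tdpart A))
    (fun a b => qmul qj (qmxmul (bcirc (tcpart A)) (kronI (n:=n2) (Pmx n3)) a b)).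

Definition tunfold n1 n2 n3 (B : qtensor n1 n2 n3) : qmx ('I_n3 * 'I_n1)%type 'I_n2 :=
  fun a j => B a.2 j a.1.
Definition tfold n1 n2 n3 (M : qmx ('I_n3 * 'I_n1)%type 'I_n2) : qtensor n1 n2 n3 :=
  fun i j s => M (s, i) j.

Definition qtprod n1 n2 n4 n3 (A : qtensor n1 n2 n3) (B : qtensor n2 n4 n3) :
  qtensor n1 n4 n3 := tfold (qmxmul (bcircz A) (tunfold B)).

Definition qtadd n1 n2 n3 (A B : qtensor n1 n2 n3) : qtensor n1 n2 n3 :=
  fun i j s => qadd (A i j s) (B i j s).
Definition qtsub n1 n2 n3 (A B : qtensor n1 n2 n3) : qtensor n1 n2 n3 :=
  fun i j s => qsub (A i j s) (B i j s).
Definition qtopp n1 n2 n3 (A : qtensor n1 n2 n3) : qtensor n1 n2 n3 :=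
  fun i j s => qopp (A i j s).

Definition qtid n n3 : qtensor n n n3 :=
  fun i j s => if (val s == 0%N) && (i == j) then qone else qzero.
Arguments qtid : clear implicits.

Fixpoint qtpow n n3 (A : qtensor n n n3) (k : nat) : qtensor n n n3 :=
  match k with
  | 0 => qtid n n3
  | k'.+1 => qtprod A (qtpow A k')
  end.

Definition qtinverse n n3 (M X : qtensor n n n3) : Prop :=
  qtprod M X = qtid n n3 /\ qtprod X M = qtid n n3.

(* conjugate transpose of a complex tensor (entries in C ⊂ Q):
   slice 1 -> (C^(1))^*, slice s -> (C^(n3+2-s))^*  (1-based) *)
Definition cctrans n1 n2 n3 (C : qtensor n1 n2 n3) : qtensor n2 n1 n3 :=
  fun i j s => cconj (C j i (ordmod s (n3 - s)%N)).

(* unfold(A^* ) = unfold(A_d^* ) - (P ⊗ I) unfold(A_c^* ) j *)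
Definition qtctrans n1 n2 n3 (A : qtensor n1 n2 n3) : qtensor n2 n1 n3 :=
  tfold (qmxsub (tunfold (cctrans (tdpart A)))
           (fun a b => qmul (qmxmul (kronI (n:=n2) (Pmx n3)) (tunfold (cctrans (tcpart A))) a b) qj)).

Definition qtunitary n n3 (U : qtensor n n n3) : Prop :=
  qtprod (qtctrans U) U = qtid n n3 /\ qtprod U (qtctrans U) = qtid n n3.

Definition fdiagonal n1 n2 n3 (S : qtensor n1 n2 n3) : Prop :=
  forall i j s, val i != val j -> S i j s = qzero.

Definition tube_fro n1 n2 n3 (S : qtensor n1 n2 n3) (i : 'I_n1) (j : 'I_n2) : R :=
  Num.sqrt (\sum_(s : 'I_n3) qnorm2 (S i j s)).

Definition is_rankQT n1 n2 n3 (A : qtensor n1 n2 n3) (r : nat) : Prop :=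
  exists (U : qtensor n1 n1 n3) (S : qtensor n1 n2 n3) (V : qtensor n2 n2 n3),
    [/\ qtunitary U, qtunitary V, fdiagonal S,
        A = qtprod (qtprod U S) (qtctrans V) &
        r = #|[pred i : 'I_n1 | [exists j : 'I_n2,
                 (val j == val i) && (0 < tube_fro S i j)]]| ].

Definition same_rankQT n1 n2 n3 (A B : qtensor n1 n2 n3) : Prop :=
  exists r, is_rankQT A r /\ is_rankQT B r.

Definition is_indexQT n n3 (A : qtensor n n n3) (k : nat) : Prop :=
  same_rankQT (qtpow A k.+1) (qtpow A k) /\
  forall m, (m < k)%N -> ~ same_rankQT (qtpow A m.+1) (qtpow A m).

Definition is_drazinQT n n3 (A : qtensor n n n3) (k : nat) (X : qtensor n n n3) : Prop :=
  [/\ qtprod (qtprod (qtpow A k) X) A = qtpow A k,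
      qtprod (qtprod X A) X = X &
      qtprod A X = qtprod X A].

Definition rhoQT n n3 (A : qtensor n n n3) : R := qspec_rad (bcircz A).

End Quat.
Arguments qtid R n n3 : clear implicits.
Arguments Pmx R n3 : clear implicits.

From HB Require Import structures.
From mathcomp Require Import all_boot all_order all_algebra.
From mathcomp Require Import boolp classical_sets reals ring.
Import Order.TTheory GRing.Theory Num.Theory.
Local Open Scope ring_scope.
Set Implicit Arguments. Unset Strict Implicit. Unset Printing Implicit Defensive.

(* Write P = A A^D and B = A + E.  The hypothesis E = P E P makes P commute
   with B, hence with B^D.  On the range of P the operator A^D B acts as
   I + A^D E, which is injective since rho_QT(A^D E) < 1 rules out the right
   eigenvalue -1 of bcirc_z(A^D E); so every power of B is injective there,
   and B^m (I - B B^D) P = 0 forces B B^D P = P.  On the kernel of P, B agrees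
   with A, whose k-th power vanishes there, so B^D (I - P) = 0.  Hence
   B B^D = P, and the remaining identities follow from
   A^D = B^D + B^D E A^D = B^D + A^D E B^D.  The whole argument is ring
   algebra: bcirc_z is multiplicative, so the QT-product makes square
   tensors with n3 > 0 a ring. *)

Section Drazin.
Variable Rg : pzRingType.
Implicit Types a e x y z : Rg.

Definition drazin a k x :=
  [/\ a ^+ k * x * a = a ^+ k, x * a * x = x & a * x = x * a].

Definition inverse_pair x y := x * y = 1 /\ y * x = 1.

Lemma drazin_exprEr a k x j : drazin a k x -> x = x ^+ j.+1 * a ^+ j.
Proof.
case=> _ xax ax_xa; have xxa : x * (x * a) = x by rewrite -ax_xa mulrA.
elim: j => [|j IHj]; first by rewrite expr1 mulr1.
have xjq : x ^+ j.+1 * (x * a) = x ^+ j.+1 by rewrite exprSr -mulrA xxa.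
by rewrite [x ^+ j.+2]exprSr [a ^+ j.+1]exprS mulrA -(mulrA _ x a) xjq.
Qed.

Lemma drazin_exprEl a k x j : drazin a k x -> x = a ^+ j * x ^+ j.+1.
Proof.
move=> dr; have [_ _ ax_xa] := dr.
by rewrite {1}(drazin_exprEr j dr); apply: commrX; apply/commr_sym/commrX.
Qed.

Lemma commr_drazin a k x z : drazin a k x -> GRing.comm z a -> GRing.comm z x.
Proof.
move=> dr za; have [akxa _ ax_xa] := dr.
have akq : a ^+ k * (a * x) = a ^+ k by rewrite ax_xa mulrA.
have qak : a * x * a ^+ k = a ^+ k.
  by rewrite -{2}akq; apply/commrX; rewrite /GRing.comm -mulrA -ax_xa.
have zak : GRing.comm z (a ^+ k) by apply: commrX.
have xz : x * z = x * z * (a * x).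
  rewrite {1 2}(drazin_exprEr k dr) -!mulrA; congr (_ * _).
  by rewrite mulrA -zak -mulrA akq.
have zx : z * x = a * x * (z * x).
  by rewrite {1 3}(drazin_exprEl k dr) mulrA zak -{1}qak -!mulrA.
rewrite /GRing.comm zx xz {1}ax_xa -!mulrA; congr (_ * _).
by rewrite !mulrA za.
Qed.

Lemma drazin_idem a k x : drazin a k x -> a * x * (a * x) = a * x.
Proof. by case=> _ xax _; rewrite -mulrA [x * _]mulrA xax. Qed.

Lemma commr_drazin_proj a k x : drazin a k x -> GRing.comm (a * x) a.
Proof. by case=> _ _ ax_xa; rewrite /GRing.comm -mulrA -ax_xa mulrA. Qed.

Lemma idem_corner p e : p * p = p -> e = p * e * p -> p * e = e /\ e * p = e.
Proof.
move=> pp epp; split; rewrite {1}epp.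
- by rewrite !mulrA pp -epp.
- by rewrite -!mulrA pp mulrA -epp.
Qed.

Lemma inverse_pair_1Dmull x y e : x = y + y * e * x -> x = y + x * e * y ->
  inverse_pair (1 + x * e) (1 - y * e).
Proof.
move=> xl xr; have xexy : x * e - x * e * (y * e) = y * e.
  by rewrite mulrA -mulrBl {1}xr addrK.
have yexe : y * e + y * e * (x * e) = x * e by rewrite mulrA -mulrDl -xl.
split.
- by rewrite mulrDl mul1r mulrBr mulr1 xexy subrK.
- by rewrite mulrBl mul1r mulrDr mulr1 yexe addrK.
Qed.

Lemma inverse_pair_1Dmulr x y e : x = y + y * e * x -> x = y + x * e * y ->
  inverse_pair (1 + e * x) (1 - e * y).
Proof.
move=> xl xr; have exey : e * x - e * x * (e * y) = e * y.
  by rewrite -{2}[y](addrK (x * e * y)) -xr mulrBr !mulrA.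
have eyex : e * y + e * y * (e * x) = e * x by rewrite {2}xl mulrDr !mulrA.
split.
- by rewrite mulrDl mul1r mulrBr mulr1 exey subrK.
- by rewrite mulrBl mul1r mulrDr mulr1 eyex addrK.
Qed.

Section Perturbation.
Variables (a e x y : Rg) (k l : nat).
Hypotheses (dra : drazin a k x) (drb : drazin (a + e) l y).
Hypothesis e_range : e = a * x * e * a * x.
Hypothesis injective_1Dxe : forall w, (1 + x * e) * w = 0 -> w = 0.

Let p := a * x.
Local Notation b := (a + e).

Let pp : p * p = p. Proof. exact: drazin_idem dra. Qed.
Let epp : e = p * e * p. Proof. by rewrite {1}e_range !mulrA. Qed.
Let pe : p * e = e. Proof. by have [] := idem_corner pp epp. Qed.
Let ep : e * p = e. Proof. by have [] := idem_corner pp epp. Qed.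

Let pb : GRing.comm p b.
Proof. by rewrite /GRing.comm mulrDr mulrDl pe ep (commr_drazin_proj dra). Qed.

Let py : GRing.comm p y. Proof. exact: commr_drazin drb pb. Qed.

(* For [p * w = w], [x * (b * w) = (1 + x * e) * w]. *)
Lemma perturbed_range_injective j w : p * w = w -> b ^+ j * w = 0 -> w = 0.
Proof.
have [_ _ ax_xa] := dra.
elim: j w => [|j IHj] w pw; first by rewrite mul1r.
have pbw : p * (b * w) = b * w by rewrite mulrA pb -mulrA pw.
rewrite exprSr -mulrA => /(IHj _ pbw) bw0.
apply: injective_1Dxe.
have -> : (1 + x * e) * w = x * (b * w).
  by rewrite !mulrDl mul1r mulrDr !mulrA -ax_xa pw.
by rewrite bw0 mulr0.
Qed.

Lemma perturbed_proj_range : b * y * p = p.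
Proof.
have [blyb _ by_yb] := drb.
have blb : b ^+ l * (b * y) = b ^+ l by rewrite by_yb mulrA blyb.
apply/eqP; rewrite eq_sym -subr_eq0; apply/eqP.
apply: (@perturbed_range_injective l).
  by rewrite mulrBr pp mulrA (commrM pb py) -mulrA pp.
by rewrite mulrBr [X in _ - X]mulrA blb subrr.
Qed.

Lemma perturbed_proj_kernel : y * (1 - p) = 0.
Proof.
have [akxa _ ax_xa] := dra.
have bq : b * (1 - p) = a * (1 - p) by rewrite mulrDl [e * _]mulrBr ep mulr1 subrr addr0.
have aq : GRing.comm a (1 - p).
  by apply/commrB/commr_sym/(commr_drazin_proj dra); apply: commr1.
have bjq j : b ^+ j * (1 - p) = a ^+ j * (1 - p).
  elim: j => [|j IHj]; first by rewrite !expr0.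
  by rewrite exprSr -mulrA bq aq mulrA IHj -mulrA -aq mulrA -exprSr.
have akq : a ^+ k * (1 - p) = 0 by rewrite mulrBr mulr1 /p ax_xa mulrA akxa subrr.
by rewrite (drazin_exprEr k drb) -mulrA bjq akq mulr0.
Qed.

Lemma drazin_perturb_proj : b * y = p.
Proof.
rewrite -perturbed_proj_range -[LHS]mulr1 -(subrK p 1) mulrDr.
by rewrite -mulrA perturbed_proj_kernel mulr0 add0r.
Qed.

Lemma drazin_perturb_resolvent : x = y + y * e * x /\ x = y + x * e * y.
Proof.
have [_ xax ax_xa] := dra; have [_ yby by_yb] := drb.
have y_proj : y * p = y.
  by apply/esym/eqP; rewrite -subr_eq0 -{1}[y]mulr1 -mulrBr perturbed_proj_kernel.
have proj_y : p * y = y by rewrite -drazin_perturb_proj by_yb yby.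
have ybx : y * b * x = x by rewrite -by_yb drazin_perturb_proj /p ax_xa xax.
have xby : x * b * y = x by rewrite -mulrA drazin_perturb_proj /p mulrA xax.
split.
- by rewrite -{1}ybx mulrDr mulrDl -mulrA y_proj.
- by rewrite -{1}xby mulrDr mulrDl -ax_xa proj_y.
Qed.

Theorem drazin_perturbation :
  [/\ a * x = b * y, y - x = - (y * e * x), y - x = - (x * e * y),
      exists z, inverse_pair (1 + x * e) z /\ y = z * x &
      exists z, inverse_pair (1 + e * x) z /\ y = x * z].
Proof.
have [xl xr] := drazin_perturb_resolvent.
split; first by rewrite drazin_perturb_proj.
- by rewrite {1}xl opprD addrA subrr add0r.
- by rewrite {1}xr opprD addrA subrr add0r.
- exists (1 - y * e); split; first exact: inverse_pair_1Dmull.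
  by rewrite mulrBl mul1r {1}xl addrK.
- exists (1 - e * y); split; first exact: inverse_pair_1Dmulr.
  by rewrite mulrBr mulr1 mulrA {1}xr addrK.
Qed.

End Perturbation.
End Drazin.

Section Quaternions.
Variable R : realType.
Local Notation quat := (quat R).

Lemma quatP (a b : quat) :
  q0 a = q0 b -> q1 a = q1 b -> q2 a = q2 b -> q3 a = q3 b -> a = b.
Proof. by case: a => ????; case: b => ???? /= -> -> -> ->. Qed.

HB.instance Definition _ := gen_eqMixin quat.
HB.instance Definition _ := gen_choiceMixin quat.

Local Ltac quat_ring := repeat (hnf; intro); apply: quatP; rewrite /=; ring.

Lemma qaddA : associative (@qadd R). Proof. quat_ring. Qed.
Lemma qaddC : commutative (@qadd R). Proof. quat_ring. Qed.
Lemma qadd0 : left_id (qzero R) (@qadd R). Proof. quat_ring. Qed.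
Lemma qaddN : left_inverse (qzero R) (@qopp R) (@qadd R). Proof. quat_ring. Qed.
Lemma qmulA : associative (@qmul R). Proof. quat_ring. Qed.
Lemma qmul1 : left_id (qone R) (@qmul R). Proof. quat_ring. Qed.
Lemma qmulr1 : right_id (qone R) (@qmul R). Proof. quat_ring. Qed.
Lemma qmulDl : left_distributive (@qmul R) (@qadd R). Proof. quat_ring. Qed.
Lemma qmulDr : right_distributive (@qmul R) (@qadd R). Proof. quat_ring. Qed.

HB.instance Definition _ := GRing.isPzRing.Build quat qaddA qaddC qadd0 qaddN
  qmulA qmul1 qmulr1 qmulDl qmulDr.

Lemma qaddE (a b : quat) : qadd a b = a + b. Proof. by []. Qed.

Lemma qsumE (I : finType) (F : I -> quat) :
  \big[@qadd R/qzero R]_(j : I) F j = \sum_(j : I) F j.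
Proof. by []. Qed.

Definition jpart (a : quat) : quat := Quat 0 0 (q2 a) (q3 a).

Lemma dpart_add_jpart a : dpart a + jpart a = a. Proof. quat_ring. Qed.
Lemma qj_cpart a : qmul (qj R) (cpart a) = jpart a. Proof. quat_ring. Qed.
Lemma dpartD a b : dpart (a + b) = dpart a + dpart b. Proof. quat_ring. Qed.
Lemma jpartD a b : jpart (a + b) = jpart a + jpart b. Proof. quat_ring. Qed.
Lemma dpart0 : dpart (0 : quat) = 0. Proof. quat_ring. Qed.
Lemma jpart0 : jpart 0 = 0. Proof. quat_ring. Qed.
Lemma dpart1 : dpart (1 : quat) = 1. Proof. quat_ring. Qed.
Lemma jpart1 : jpart 1 = 0. Proof. quat_ring. Qed.

Lemma dpartM_split u v w :
  dpart ((dpart u + jpart v) * w) = dpart u * dpart w + jpart v * jpart w.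
Proof. quat_ring. Qed.

Lemma jpartM_split u v w :
  jpart ((dpart u + jpart v) * w) = dpart u * jpart w + jpart v * dpart w.
Proof. quat_ring. Qed.

Lemma dpart_sum (I : finType) (F : I -> quat) : dpart (\sum_i F i) = \sum_i dpart (F i).
Proof. exact: (big_morph _ dpartD dpart0). Qed.

Lemma jpart_sum (I : finType) (F : I -> quat) : jpart (\sum_i F i) = \sum_i jpart (F i).
Proof. exact: (big_morph _ jpartD jpart0). Qed.

Lemma qnormN1 : qnorm (- 1 : quat) = 1.
Proof.
by rewrite /qnorm (_ : qnorm2 _ = 1) ?sqrtr1 // /qnorm2 /=; ring.
Qed.

End Quaternions.

Local Ltac tensor_ext := apply: funext => i; apply: funext => l; apply: funext => s.

Section QTProduct.
Variables (R : realType) (m : nat).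
Local Notation p := m.+1.
Local Notation quat := (quat R).

Lemma ordmod_subE (x y : 'I_p) : ordmod x (x + p - y) = x - y.
Proof. by apply: val_inj; rewrite /= modnDmr addnBA // ltnW. Qed.

(* The [j]-part of [bcircz] is [bcirc] of [A_c] composed with [P_n3], which
   turns the block index [x - y] into [x + y]. *)
Lemma bcircz_entry n1 n2 (A : qtensor R n1 n2 p) x i y j :
  bcircz A (x, i) (y, j) = dpart (A i j (x - y)) + jpart (A i j (x + y)).
Proof.
rewrite /bcircz /qmxadd /bcirc /tdpart /= ordmod_subE; congr (_ + _).
rewrite -qj_cpart; congr (qmul _ _).
rewrite /qmxmul qsumE (bigD1 (- y, j)) //= big1 => [|[r l] /=].
  rewrite /kronI /Pmx /tcpart /= eqxx (ordmod_subE x (- y)) opprK.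
  have -> : (val y == (p - val (- y)) %% p)%N by rewrite -{1}(opprK y).
  by rewrite addr0; apply: mulr1.
rewrite /kronI /Pmx /= xpair_eqE negb_and => /orP neq.
case: (l =P j) => [lj|_]; last exact: mulr0.
case: (_ =P _) => [ry|_]; last exact: mulr0.
have {}ry : r = - y by rewrite -[r]opprK; congr (- _); apply: val_inj; rewrite /= ry.
by move: neq; rewrite ry lj !eqxx; case.
Qed.

Lemma qtprodE n1 n2 n4 (A : qtensor R n1 n2 p) (B : qtensor R n2 n4 p) i l s :
  qtprod A B i l s = \sum_b bcircz A (s, i) b * B b.2 l b.1.
Proof. by []. Qed.

Lemma qtprod_entry n1 n2 n4 (A : qtensor R n1 n2 p) (B : qtensor R n2 n4 p) i l s :
  qtprod A B i l s =
  \sum_b (dpart (A i b.2 (s - b.1)) + jpart (A i b.2 (s + b.1))) * B b.2 l b.1.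
Proof. by apply: eq_bigr => -[r j] _; rewrite bcircz_entry. Qed.

Lemma sum_shift (T : finType) (c : 'I_p) (F : 'I_p * T -> quat) :
  \sum_b F b = \sum_b F (b.1 + c, b.2).
Proof.
rewrite (reindex_inj (h := fun b => (b.1 + c, b.2))) //.
by apply: (can_inj (g := fun b => (b.1 - c, b.2))) => -[a1 a2]; rewrite addrK.
Qed.

Lemma bcircz_mul n1 n2 n4 (A : qtensor R n1 n2 p) (B : qtensor R n2 n4 p) a c :
  bcircz (qtprod A B) a c = \sum_b bcircz A a b * bcircz B b c.
Proof.
case: a c => x i [y l].
rewrite bcircz_entry !qtprod_entry dpart_sum jpart_sum.
under [X in X + _]eq_bigr => b _ do rewrite dpartM_split.
under [X in _ + X]eq_bigr => b _ do rewrite jpartM_split.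
rewrite [RHS](eq_bigr (fun b =>
    (dpart (A i b.2 (x - b.1)) + jpart (A i b.2 (x + b.1))) *
    (dpart (B b.2 l (b.1 - y)) + jpart (B b.2 l (b.1 + y))))); last first.
  by move=> -[r j] _; rewrite !bcircz_entry.
under [RHS]eq_bigr => b _ do rewrite mulrDl !mulrDr.
rewrite !big_split /=.
rewrite [X in _ = X + _ + _](sum_shift y) [X in _ = _ + X + _](sum_shift (- y)).
rewrite [X in _ = _ + (X + _)](sum_shift y) [X in _ = _ + (_ + X)](sum_shift (- y)) /=.
under [X in _ = X + _ + _]eq_bigr => b _ do rewrite addrK opprD addrA addrAC.
under [X in _ = _ + X + _]eq_bigr => b _ do rewrite subrK opprB addrA.
under [X in _ = _ + (X + _)]eq_bigr => b _ do rewrite addrK (addrC b.1) addrA.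
under [X in _ = _ + (_ + X)]eq_bigr => b _ do rewrite subrK (addrC b.1) addrA.
by rewrite addrACA; congr (_ + _); apply: addrC.
Qed.

Lemma bcircz_col0 n1 n2 (B : qtensor R n1 n2 p) s i j : bcircz B (s, i) (0, j) = B i j s.
Proof. by rewrite bcircz_entry subr0 addr0 dpart_add_jpart. Qed.

Lemma qtprodA n1 n2 n4 n5 (A : qtensor R n1 n2 p) (B : qtensor R n2 n4 p)
  (C : qtensor R n4 n5 p) : qtprod A (qtprod B C) = qtprod (qtprod A B) C.
Proof.
tensor_ext; apply/esym; rewrite !qtprodE.
under eq_bigr => b _ do rewrite bcircz_mul big_distrl.
rewrite exchange_big /=; apply: eq_bigr => c _.
by rewrite qtprodE big_distrr /=; apply: eq_bigr => b _; rewrite mulrA.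
Qed.

Lemma bcircz_id n x i y j :
  bcircz (qtid R n p) (x, i) (y, j) = ((x == y) && (i == j))%:R.
Proof.
rewrite bcircz_entry /qtid -[qone R]/(1 : quat) -[qzero R]/(0 : quat).
rewrite (fun_if (@dpart R)) (fun_if (@jpart R)).
rewrite dpart1 dpart0 jpart1 jpart0 if_same addr0 -subr_eq0 -val_eqE.
by case: (_ && _).
Qed.

Lemma qtprod1 n n2 (B : qtensor R n n2 p) : qtprod (qtid R n p) B = B.
Proof.
tensor_ext; rewrite qtprodE (bigD1 (s, i)) //= big1 => [|[r j] rj].
  by rewrite bcircz_id !eqxx mul1r addr0.
by rewrite bcircz_id -xpair_eqE eq_sym (negbTE rj) mul0r.
Qed.

Lemma qtprod1r n1 n (A : qtensor R n1 n p) : qtprod A (qtid R n p) = A.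
Proof.
tensor_ext; rewrite qtprodE (bigD1 (0, l)) //= big1 => [|[r j] rj].
  by rewrite bcircz_col0 /qtid /= !eqxx mulr1 addr0.
rewrite /qtid /=; case: ifP => [/andP [/eqP r0 /eqP jl]|_]; last exact: mulr0.
by move: rj; rewrite jl (_ : r = 0) ?eqxx //; apply: val_inj.
Qed.

Lemma bcircz_add n1 n2 (A B : qtensor R n1 n2 p) a c :
  bcircz (qtadd A B) a c = bcircz A a c + bcircz B a c.
Proof.
by case: a c => x i [y j]; rewrite !bcircz_entry /qtadd !qaddE dpartD jpartD addrACA.
Qed.

Lemma qtprodDl n1 n2 n4 (A B : qtensor R n1 n2 p) (C : qtensor R n2 n4 p) :
  qtprod (qtadd A B) C = qtadd (qtprod A C) (qtprod B C).
Proof.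
tensor_ext; rewrite /qtadd !qtprodE qaddE -big_split /=.
by apply: eq_bigr => b _; rewrite bcircz_add mulrDl.
Qed.

Lemma qtprodDr n1 n2 n4 (A : qtensor R n1 n2 p) (B C : qtensor R n2 n4 p) :
  qtprod A (qtadd B C) = qtadd (qtprod A B) (qtprod A C).
Proof.
tensor_ext; rewrite /qtadd !qtprodE qaddE -big_split /=.
by apply: eq_bigr => b _; rewrite qaddE mulrDr.
Qed.

End QTProduct.

Lemma qnorm_le_qspec_rad (R : realType) (I : finType) (M : qmx R I I) l :
  0 < qspec_rad M -> right_eigenvalue M l -> qnorm l <= qspec_rad M.
Proof.
rewrite /qspec_rad; set S := (X in sup X) => rho_gt0 Ml.
have Sl : S (qnorm l) by exists l.
(* [sup] of a set without upper bound is [0], which positivity excludes. *)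
have [ub|nub] := pselect (has_ubound S).
  by apply: sup_upper_bound => //; split; first by exists (qnorm l).
by move: rho_gt0; rewrite sup_out ?ltxx // => -[].
Qed.

Lemma qtprod_right_eigenvalue (R : realType) n n2 n3 (X : qtensor R n n n3)
    (W : qtensor R n n2 n3) l c :
  (forall i s, qtprod X W i l s = qmul (W i l s) c) ->
  (exists i s, W i l s <> qzero R) -> right_eigenvalue (bcircz X) c.
Proof.
move=> XW [i [s Wils]]; exists (fun b => W b.2 l b.1); split; first by exists (s, i).
by case=> s' i'; rewrite -XW.
Qed.

Lemma qtensor0_eq (R : realType) n1 n2 (X Y : qtensor R n1 n2 0) : X = Y.
Proof. by apply: funext => i; apply: funext => j; apply: funext => -[]. Qed.

Section TensorRing.
Variables (R : realType) (n m : nat).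

Definition sqtensor := qtensor R n n m.+1.
HB.instance Definition _ := gen_eqMixin sqtensor.
HB.instance Definition _ := gen_choiceMixin sqtensor.

Definition qtzero : sqtensor := fun _ _ _ => 0.

Lemma qtaddA : associative (@qtadd R n n m.+1).
Proof. by move=> A B C; tensor_ext; apply: addrA. Qed.
Lemma qtaddC : commutative (@qtadd R n n m.+1).
Proof. by move=> A B; tensor_ext; apply: addrC. Qed.
Lemma qtadd0 : left_id qtzero (@qtadd R n n m.+1).
Proof. by move=> A; tensor_ext; apply: add0r. Qed.
Lemma qtaddN : left_inverse qtzero (@qtopp R n n m.+1) (@qtadd R n n m.+1).
Proof. by move=> A; tensor_ext; apply: addNr. Qed.

HB.instance Definition _ := GRing.isPzRing.Build sqtensor qtaddA qtaddC qtadd0 qtaddN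
  (@qtprodA R m n n n n) (@qtprod1 R m n n) (@qtprod1r R m n n)
  (@qtprodDl R m n n n) (@qtprodDr R m n n n).

Lemma qtpowE (A : sqtensor) k : qtpow A k = A ^+ k.
Proof. by elim: k => [|k IHk] //=; rewrite exprS -IHk. Qed.

Lemma is_drazinQTE (A X : sqtensor) k : is_drazinQT A k X = drazin A k X.
Proof. by rewrite /is_drazinQT qtpowE. Qed.

Lemma rhoQT_1Dinjective (X : sqtensor) :
  0 < rhoQT X < 1 -> forall W : sqtensor, (1 + X) * W = 0 -> W = 0.
Proof.
case/andP => rho_gt0 rho_lt1 W XW0.
have XW : X * W = - W by apply/eqP; rewrite -addr_eq0 addrC -{1}(mul1r W) -mulrDl XW0.
apply: contrapT => W_neq0.
have [i [l [s Wils]]] : exists i l s, W i l s <> 0.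
  apply: contrapT => W0; apply: W_neq0; tensor_ext.
  by apply: contrapT => Wnz; apply: W0; do 3 eexists; exact: Wnz.
have : right_eigenvalue (bcircz X) (-1).
  apply: (qtprod_right_eigenvalue (W := W) (l := l)); last by exists i, s.
  by move=> i' s'; rewrite -[qtprod _ _]/(X * W) XW -[qmul _ _]/(W i' l s' * -1) mulrN1.
move=> /(qnorm_le_qspec_rad rho_gt0); rewrite qnormN1.
by rewrite leNgt rho_lt1.
Qed.

End TensorRing.

Theorem theorem4p4 (R : realType) (n n3 k : nat) (A E AD : qtensor R n n n3) :
  is_indexQT A k ->
  is_drazinQT A k AD ->
  E = qtprod (qtprod (qtprod (qtprod A AD) E) A) AD ->
  0 < rhoQT (qtprod AD E) < 1 ->
  forall (kB : nat) (BD : qtensor R n n n3),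
    is_indexQT (qtadd A E) kB ->
    is_drazinQT (qtadd A E) kB BD ->
    [/\ qtprod A AD = qtprod (qtadd A E) BD,
        qtsub BD AD = qtopp (qtprod (qtprod BD E) AD),
        qtsub BD AD = qtopp (qtprod (qtprod AD E) BD),
        exists M, qtinverse (qtadd (qtid R n n3) (qtprod AD E)) M /\ BD = qtprod M AD &
        exists M, qtinverse (qtadd (qtid R n n3) (qtprod E AD)) M /\ BD = qtprod AD M].
Proof.
case: n3 A E AD => [|m] A E AD _ drA E_range rho kB BD _ drB.
  by split; try exists (qtid R n 0); do ?split; apply: qtensor0_eq.
move: drA drB; rewrite !(is_drazinQTE (m := m)) => drA drB.
exact: drazin_perturbation drA drB E_range (rhoQT_1Dinjective rho).
Qed.
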